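(* For any $w, w' \in \mathcal{C}\langle A \rangle$ and any integer $M \ge 1$, \[ Z^{\mathcal{S}, \mathrm{sh}}_{q, M}(w \,\mathrm{sh}_{\hbar}\, w')=Z^{\mathcal{S}, \mathrm{sh}}_{q, M}\bigl(w \, \psi^{\mathrm{sh}}(w')\bigr), \] where $w\,\psi^{\mathrm{sh}}(w')$ denotes the concatenation product in $\mathcal{C}\langle A\rangle$.
   Context: Let $\mathcal{C}=\mathbb{Q}[\hbar]$ with $\hbar$ a formal variable, and let $\mathfrak{H}=\mathcal{C}\langle a,b\rangle$ be the non-commutative polynomial ring in $a,b$ over $\mathcal{C}$. For $k\ge 1$ put $g_k=ba^k$. Let $A=\{\hbar b\}\cup\{ba^k\mid k\ge 1\}$, let $\mathcal{C}\langle A\rangle$ be the $\mathcal{C}$-subalgebra of $\mathfrak{H}$ generated by $1$ and $A$, and let $\mathfrak{z}$ be the $\mathcal{C}$-span of $A$. Fix $q\in\mathbb{C}$ with $0<|q|<1$ and regard $\mathbb{C}$ as a $\mathcal{C}$-module with $\hbar$ acting as multiplication by $1-q$. Let $[m]=(1-q^m)/(1-q)$. For $m\ge 1$ let $F_q(m;\cdot):\mathfrak{z}\to\mathbb{C}$ be the $\mathcal{C}$-linear map with $F_q(m;\hbar b)=1-q$ and $F_q(m;g_k)=q^{km}/[m]^k$ for $k\ge1$. For $M\ge 1$ let $Z_{q,M}:\mathcal{C}\langle A\rangle\to\mathbb{C}$ be the $\mathcal{C}$-linear map with $Z_{q,M}(1)=1$ and $Z_{q,M}(u_1\cdots u_r)=\sum_{0<m_1<\cdots<m_r<M}\prod_{i=1}^r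 F_q(m_i;u_i)$ for $u_1,\dots,u_r\in A$. The shuffle product $\mathrm{sh}_\hbar$ on $\mathfrak{H}$ (written infix) is the $\mathcal{C}$-bilinear product determined by $w\,\mathrm{sh}_\hbar\,1=1\,\mathrm{sh}_\hbar\,w=w$, $wa\,\mathrm{sh}_\hbar\,w'a=(wa\,\mathrm{sh}_\hbar\,w'+w\,\mathrm{sh}_\hbar\,w'a+\hbar\,(w\,\mathrm{sh}_\hbar\,w'))a$ and $wb\,\mathrm{sh}_\hbar\,w'=w\,\mathrm{sh}_\hbar\,w'b=(w\,\mathrm{sh}_\hbar\,w')b$ for all $w,w'\in\mathfrak{H}$; $\mathcal{C}\langle A\rangle$ is closed under it. Let $\psi^{\mathrm{sh}}$ be the $\mathcal{C}$-algebra anti-involution of $\mathcal{C}\langle A\rangle$ with $\psi^{\mathrm{sh}}(\hbar b)=\hbar b$ and $\psi^{\mathrm{sh}}(ba^k)=b(-a-\hbar)^k$ for $k\ge1$. Define the $\mathcal{C}$-linear map $w^{\mathcal{S},\mathrm{sh}}_\hbar:\mathcal{C}\langle A\rangle\to\mathcal{C}\langle A\rangle$ by $w^{\mathcal{S},\mathrm{sh}}_\hbar(1)=1$ and $w^{\mathcal{S},\mathrm{sh}}_\hbar(u_1\cdots u_r)=\sum_{i=0}^r (u_1\cdots u_i)\,\mathrm{sh}_\hbar\, \psi^{\mathrm{sh}}(u_{i+1}\cdots u_r)$ for $r\ge1$, $u_1,\dots,u_r\in A$, and set $Z^{\mathcal{S},\mathrm{sh}}_{q,M}=Z_{q,M}\circ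 w^{\mathcal{S},\mathrm{sh}}_\hbar$. *)

From HB Require Import structures.
From mathcomp Require Import all_boot all_algebra.
From mathcomp Require Import reals complex.
Set Implicit Arguments. Unset Strict Implicit. Unset Printing Implicit Defensive.
Import GRing.Theory Num.Theory.
Local Open Scope ring_scope.

(* ---------- The algebra H = C<a,b>, C = Q[hbar] = {poly rat} (hbar = 'X) ---------- *)
Inductive letter := La | Lb.
Definition letter_eqb (x y : letter) : bool :=
  match x, y with La, La | Lb, Lb => true | _, _ => false end.
Lemma letter_eqP : Equality.axiom letter_eqb.
Proof. by case; case; constructor. Qed.
HB.instance Definition _ := hasDecEq.Build letter letter_eqP.

Definition word := seq letter.

(* An element of H is represented by a formal (finite) C-linear combination of
   words: the list [:: (c1, w1); ...; (cn, wn)] stands for c1 w1 + ... + cn wn.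
   All maps below are defined term-wise, i.e. as the C-(bi)linear extensions
   of their values on words, hence they depend only on the represented element. *)
Definition hpoly := seq ({poly rat} * word).

Definition hone : hpoly := [:: (1, [::])].
Definition hscale (c : {poly rat}) (p : hpoly) : hpoly :=
  [seq (c * t.1, t.2) | t <- p].
Definition hmul (p p' : hpoly) : hpoly :=
  flatten [seq [seq (t.1 * t'.1, t.2 ++ t'.2) | t' <- p'] | t <- p].

(* prepend a letter; used on reversed words (head = last letter) *)
Definition hcons (x : letter) (p : hpoly) : hpoly := [seq (t.1, x :: t.2) | t <- p].

(* shr u v = rev-image of (rev u) sh (rev v): words are given reversed *)
Fixpoint shr (u : word) : word -> hpoly :=
  match u with
  | [::] => fun v => [:: (1, v)]
  | x :: u' =>
    fix shr_in (v : word) : hpoly :=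
      match v with
      | [::] => [:: (1, u)]
      | y :: v' =>
        match x, y with
        | Lb, _ => hcons Lb (shr u' v)                (* wb sh w' = (w sh w')b *)
        | La, Lb => hcons Lb (shr_in v')              (* w sh w'b = (w sh w')b *)
        | La, La =>                                   (* wa sh w'a *)
            hcons La (shr_in v' ++ shr u' v ++ hscale 'X (shr u' v'))
        end
      end
  end.

Definition sh_word (u v : word) : hpoly :=
  [seq (t.1, rev t.2) | t <- shr (rev u) (rev v)].

Definition hsh (p p' : hpoly) : hpoly :=
  flatten [seq flatten [seq hscale (t.1 * t'.1) (sh_word t.2 t'.2) | t' <- p'] | t <- p].

(* dec w = (l, [:: k1; ...; kr]) iff w = a^l b a^k1 ... b a^kr *)
Fixpoint dec (w : word) : nat * seq nat :=
  match w with
  | [::] => (0%N, [::])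
  | La :: w' => ((dec w').1.+1, (dec w').2)
  | Lb :: w' => (0%N, (dec w').1 :: (dec w').2)
  end.

(* w is empty or begins with b *)
Definition binit (w : word) : bool := (dec w).1 == 0%N.
(* number of blocks b a^0 = b, i.e. of letters hbar*b needed *)
Definition n0 (w : word) : nat := count (pred1 0%N) (dec w).2.

Definition block_word (ks : seq nat) : word := flatten [seq Lb :: nseq k La | k <- ks].

(* membership in C<A>: every term c*w has w = u_1...u_r (u_i = b or b a^k, k>=1)
   and hbar^(number of u_i equal to b) divides c, so that c*w is a C-multiple
   of a word in A = {hbar b} U {b a^k | k >= 1}. *)
Definition inCA (p : hpoly) : bool :=
  all (fun t => binit t.2 && ('X ^+ n0 t.2 %| t.1)) p.

(* psi(b a^k) = b (-a-hbar)^k for k >= 1; on the letter hbar b, psi(hbar b) = hbar b,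
   which (by C-linearity) is encoded by the block b a^0 |-> b. *)
Definition psi_block (k : nat) : hpoly :=
  hmul [:: (1, [:: Lb])] (iter k (fun p => hmul p [:: (-1, [:: La]); (- 'X, [::])]) hone).
Definition psi_blocks (ks : seq nat) : hpoly :=
  foldr (fun k acc => hmul acc (psi_block k)) hone ks.
Definition psi (p : hpoly) : hpoly :=
  flatten [seq if binit t.2 then hscale t.1 (psi_blocks (dec t.2).2) else [::] | t <- p].

Definition wS_blocks (ks : seq nat) : hpoly :=
  flatten [seq hsh [:: (1, block_word (take i ks))] (psi_blocks (drop i ks))
          | i <- iota 0 (size ks).+1].
Definition wS (p : hpoly) : hpoly :=
  flatten [seq if binit t.2 then hscale t.1 (wS_blocks (dec t.2).2) else [::] | t <- p].

Local Open Scope complex_scope.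

Inductive Aletter := hbar_b | g of nat.   (* g k = b a^k, k >= 1 *)
Definition toA (k : nat) : Aletter := if k == 0%N then hbar_b else g k.

Section Zq.
Variables (R : realType) (q : R[i]).

Definition qint (m : nat) : R[i] := (1 - q ^+ m) / (1 - q).

Definition Fq (m : nat) (u : Aletter) : R[i] :=
  match u with
  | hbar_b => 1 - q
  | g k => q ^+ (k * m) / qint m ^+ k
  end.

Fixpoint Zfrom (M lo : nat) (us : seq Aletter) : R[i] :=
  match us with
  | [::] => 1
  | u :: us' => \sum_(lo.+1 <= m < M) Fq m u * Zfrom M m us'
  end.

Definition ZA (M : nat) (us : seq Aletter) : R[i] := Zfrom M 0 us.

(* hbar acts on C as multiplication by 1 - q *)
Definition evh (c : {poly rat}) : R[i] := (map_poly ratr c).[1 - q].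

(* Z_{q,M} on C<A>, extended C-linearly: a term c*w with w = u_1...u_r (blocks)
   equals (c / hbar^n0) * (A-word), so Z(c*w) = ev(c) (1-q)^(-n0) Z(A-word);
   this agrees with Z_{q,M} on every element of C<A> (1 - q != 0). *)
Definition Zq (M : nat) (p : hpoly) : R[i] :=
  \sum_(t <- p) if binit t.2
                then evh t.1 / (1 - q) ^+ n0 t.2 * ZA M (map toA (dec t.2).2)
                else 0.

Definition ZSsh (M : nat) (p : hpoly) : R[i] := Zq M (wS p).
End Zq.

From mathcomp Require Import all_boot all_algebra.
From mathcomp Require Import reals complex.
From mathcomp Require Import ring zify.
Import GRing.Theory Num.Theory.
Local Open Scope ring_scope.

(* Write theta for the anti-automorphism of H with a |-> - a - hbar and b |-> b
   (on C<A> it is psi^sh), and for a word v let omega_z(v) be the sum, over the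
   factorisations v = x b y, of x sh (z theta(y)).  Cutting w b at its letters b
   gives w^S(w) = omega_1(w b).  The map omega is a derivation of the shuffle
   product, omega_z(x sh y) = omega_{y sh z}(x) + omega_{x sh z}(y), and together
   with theta(a) = - a - hbar this yields omega_1(p sh y) = omega_1(p theta(y))
   for every word y.  Taking y = w' b and using theta(w' b) = psi^sh(w') b gives
   w^S(w sh w') = w^S(w psi^sh(w')) already in H. *)

Lemma all_flatten (T : Type) (a : pred T) (s : seq (seq T)) :
  all a (flatten s) = all (all a) s.
Proof. by elim: s => //= x s IH; rewrite all_cat IH. Qed.

Definition hrcons (x : letter) (p : hpoly) : hpoly := [seq (t.1, rcons t.2 x) | t <- p].

Lemma shr_nil_r u : shr u [::] = [:: (1, u)].
Proof. by case: u. Qed.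

Lemma shr_b_l u v : shr (Lb :: u) v = hcons Lb (shr u v).
Proof. by case: v => [|y v] //=; rewrite shr_nil_r. Qed.

Lemma shr_b_r u v : shr u (Lb :: v) = hcons Lb (shr u v).
Proof. by elim: u => [|[] u IH] //=; rewrite IH -shr_b_l. Qed.

Lemma map_rev_hcons x p :
  [seq (t.1, rev t.2) | t <- hcons x p] = hrcons x [seq (t.1, rev t.2) | t <- p].
Proof. by rewrite /hcons /hrcons -!map_comp; apply: eq_map => t /=; rewrite rev_cons. Qed.

Lemma sh_word_nil_l v : sh_word [::] v = [:: (1, v)].
Proof. by rewrite /sh_word /= revK. Qed.

Lemma sh_word_nil_r u : sh_word u [::] = [:: (1, u)].
Proof. by rewrite /sh_word shr_nil_r /= revK. Qed.

Lemma sh_word_rcons_b_l u v : sh_word (rcons u Lb) v = hrcons Lb (sh_word u v).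
Proof. by rewrite /sh_word rev_rcons shr_b_l map_rev_hcons. Qed.

Lemma sh_word_rcons_b_r u v : sh_word u (rcons v Lb) = hrcons Lb (sh_word u v).
Proof. by rewrite /sh_word rev_rcons shr_b_r map_rev_hcons. Qed.

Lemma sh_word_rcons_aa u v : sh_word (rcons u La) (rcons v La) =
  hrcons La (sh_word (rcons u La) v ++ sh_word u (rcons v La) ++ hscale 'X (sh_word u v)).
Proof.
rewrite /sh_word !rev_rcons /= map_rev_hcons !map_cat /hscale -!map_comp.
by congr (hrcons _ (_ ++ _ ++ _)); apply: eq_map.
Qed.

Lemma block_word_dec v : binit v -> block_word (dec v).2 = v.
Proof.
have dec_split : v = nseq (dec v).1 La ++ block_word (dec v).2.
  by elim: v => [|[] v IH] //=; rewrite [in LHS]IH.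
by rewrite /binit => /eqP dec0; rewrite [RHS]dec_split dec0.
Qed.

Lemma block_word_rcons ks k : block_word (rcons ks k) = block_word ks ++ Lb :: nseq k La.
Proof. by rewrite /block_word map_rcons flatten_rcons. Qed.

Definition all_binit (p : hpoly) : bool := all (fun t => binit t.2) p.

Lemma binit_rev w : binit (rev w) = (last Lb w == Lb).
Proof. by case/lastP: w => [|w []] //; rewrite rev_rcons last_rcons. Qed.

Lemma shr_last_b u v x : last x u == Lb -> last x v == Lb ->
  all (fun t => last x t.2 == Lb) (shr u v).
Proof.
elim: u v x => [|y u IHu] v x u_b v_b; first by rewrite /= v_b.
elim: v x u_b v_b => [|y' v IHv] x u_b v_b; first by rewrite /= u_b.
case: y IHv u_b => IHv u_b; last by rewrite shr_b_l /hcons all_map; apply: IHu.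
case: y' v_b => v_b; last by rewrite shr_b_r /hcons all_map; apply: IHv.
rewrite /= /hcons all_map !all_cat /hscale all_map.
by rewrite IHv // IHu // IHu.
Qed.

Lemma all_binit_sh_word u v : binit u -> binit v -> all_binit (sh_word u v).
Proof.
rewrite -(revK u) -(revK v) !binit_rev => u_b v_b.
rewrite /sh_word /all_binit all_map !revK.
by apply: sub_all (shr_last_b _ _ _ u_b v_b) => t /=; rewrite binit_rev.
Qed.

Lemma all_binit_hscale c p : all_binit p -> all_binit (hscale c p).
Proof. by rewrite /all_binit all_map. Qed.

Lemma all_binit_hsh p p' : all_binit p -> all_binit p' -> all_binit (hsh p p').
Proof.
move=> /allP binit_p /allP binit_p'; rewrite /all_binit all_flatten all_map.
apply/allP => t tp /=; rewrite all_flatten all_map; apply/allP => t' t'p' /=.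
by apply/all_binit_hscale/all_binit_sh_word; [apply: binit_p | apply: binit_p'].
Qed.

Lemma binit_cat u v : binit u -> binit v -> binit (u ++ v).
Proof. by case: u => [|[] u]. Qed.

Lemma all_binit_hmul p p' : all_binit p -> all_binit p' -> all_binit (hmul p p').
Proof.
move=> /allP binit_p /allP binit_p'; rewrite /all_binit all_flatten all_map.
apply/allP => t tp /=; rewrite all_map; apply/allP => t' t'p' /=.
by apply: binit_cat; [apply: binit_p | apply: binit_p'].
Qed.

Lemma all_binit_psi p : all_binit (psi p).
Proof.
have binit_blocks ks : all_binit (psi_blocks ks).
  elim: ks => [|k ks IH] //=; apply: all_binit_hmul => //.
  by rewrite /psi_block /hmul /all_binit /= cats0 all_map; apply/allP.
rewrite /psi /all_binit all_flatten all_map; apply/allP => t _ /=.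
by case: (binit t.2) => //; apply: all_binit_hscale.
Qed.

Lemma inCA_all_binit p : inCA p -> all_binit p.
Proof. by apply: sub_all => t /andP []. Qed.

Section LinearExtension.
Context {F : numFieldType} (h : F).

Definition evc (c : {poly rat}) : F := (map_poly ratr c).[h].

Lemma evcM a b : evc (a * b) = evc a * evc b.
Proof. by rewrite /evc rmorphM /= hornerM. Qed.

Lemma evcN a : evc (- a) = - evc a.
Proof. by rewrite /evc rmorphN /= hornerN. Qed.

Lemma evc1 : evc 1 = 1.
Proof. by rewrite /evc rmorph1 hornerC. Qed.

Lemma evcX : evc 'X = h.
Proof. by rewrite /evc map_polyX hornerX. Qed.

Definition linext (g : word -> F) (p : hpoly) : F := \sum_(t <- p) evc t.1 * g t.2.

(* An hpoly is an unnormalised list of terms, so identities in H (with hbar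
   specialised to h) are stated through all linear extensions. *)
Definition hequiv (p p' : hpoly) := forall g, linext g p = linext g p'.

Lemma linext_nil g : linext g [::] = 0.
Proof. by rewrite /linext big_nil. Qed.

Lemma linext_cat g p p' : linext g (p ++ p') = linext g p + linext g p'.
Proof. by rewrite /linext big_cat. Qed.

Lemma linext_flatten g (s : seq hpoly) : linext g (flatten s) = \sum_(p <- s) linext g p.
Proof.
by elim: s => [|p s IH]; rewrite ?big_nil ?big_cons ?linext_nil // linext_cat IH.
Qed.

Lemma linext_word g w : linext g [:: (1, w)] = g w.
Proof. by rewrite /linext big_seq1 evc1 mul1r. Qed.

Lemma eq_linext f g p : (forall w, f w = g w) -> linext f p = linext g p.
Proof. by move=> fg; apply: eq_bigr => t _; rewrite fg. Qed.

Lemma linextD f g p : linext (fun w => f w + g w) p = linext f p + linext g p.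
Proof. by rewrite /linext -big_split; apply: eq_bigr => t _; rewrite mulrDr. Qed.

Lemma linextZ c g p : linext (fun w => c * g w) p = c * linext g p.
Proof. by rewrite /linext big_distrr; apply: eq_bigr => t _ /=; rewrite mulrCA. Qed.

Lemma linextN g p : linext (fun w => - g w) p = - linext g p.
Proof. by rewrite /linext -sumrN; apply: eq_bigr => t _; rewrite mulrN. Qed.

Lemma linext0 p : linext (fun=> 0) p = 0.
Proof. by rewrite /linext big1 // => t _; rewrite mulr0. Qed.

Lemma linext_hrcons g x p : linext g (hrcons x p) = linext (fun w => g (rcons w x)) p.
Proof. by rewrite /linext big_map. Qed.

Lemma linext_hscale g c p : linext g (hscale c p) = evc c * linext g p.
Proof.
rewrite /linext big_map big_distrr; apply: eq_bigr => t _ /=.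
by rewrite evcM mulrA.
Qed.

Lemma linext_hmul g p p' :
  linext g (hmul p p') = linext (fun u => linext (fun v => g (u ++ v)) p') p.
Proof.
rewrite /hmul linext_flatten big_map; apply: eq_bigr => t _.
rewrite /linext big_map big_distrr; apply: eq_bigr => t' _ /=.
by rewrite evcM mulrA.
Qed.

Lemma linext_hsh g p p' :
  linext g (hsh p p') = linext (fun u => linext (fun v => linext g (sh_word u v)) p') p.
Proof.
rewrite /hsh linext_flatten big_map; apply: eq_bigr => t _.
rewrite linext_flatten big_map /linext big_distrr; apply: eq_bigr => t' _ /=.
by rewrite -/(linext _ _) linext_hscale evcM mulrA.
Qed.

Lemma linext_hsh_word g u p :
  linext g (hsh [:: (1, u)] p) = linext (fun v => linext g (sh_word u v)) p.
Proof. by rewrite linext_hsh linext_word. Qed.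

Lemma exchange_linext (f : word -> word -> F) p p' :
  linext (fun u => linext (f u) p') p = linext (fun v => linext (f^~ v) p) p'.
Proof.
rewrite /linext; under eq_bigr => t _ do rewrite big_distrr.
rewrite exchange_big /=; apply: eq_bigr => s _.
by rewrite big_distrr; apply: eq_bigr => t _ /=; rewrite mulrCA.
Qed.

Lemma hmulA p p' p'' : hequiv (hmul (hmul p p') p'') (hmul p (hmul p' p'')).
Proof.
move=> g; rewrite !linext_hmul; apply: eq_linext => u; rewrite linext_hmul.
by apply: eq_linext => v; apply: eq_linext => w; rewrite catA.
Qed.

Lemma hmulp1 p : hequiv (hmul p hone) p.
Proof. by move=> g; rewrite linext_hmul; apply: eq_linext => u; rewrite linext_word cats0. Qed.

Lemma hmul1p p : hequiv (hmul hone p) p.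
Proof. by move=> g; rewrite linext_hmul linext_word. Qed.

Lemma hmul_equiv_l p p' p'' : hequiv p p' -> hequiv (hmul p p'') (hmul p' p'').
Proof. by move=> pp' g; rewrite !linext_hmul pp'. Qed.

Lemma hmul_equiv_r p p' p'' : hequiv p' p'' -> hequiv (hmul p p') (hmul p p'').
Proof. by move=> pp' g; rewrite !linext_hmul; apply: eq_linext => u; rewrite pp'. Qed.

Lemma hsh_equiv_r p p' p'' : hequiv p' p'' -> hequiv (hsh p p') (hsh p p'').
Proof. by move=> pp' g; rewrite !linext_hsh; apply: eq_linext => u; rewrite pp'. Qed.

Lemma linext_sh_word_rcons_aa g u v :
  let ga w := g (rcons w La) in
  linext g (sh_word (rcons u La) (rcons v La)) =
  linext ga (sh_word (rcons u La) v) + linext ga (sh_word u (rcons v La))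
  + h * linext ga (sh_word u v).
Proof. by rewrite sh_word_rcons_aa linext_hrcons !linext_cat linext_hscale evcX addrA. Qed.

Lemma sh_wordC u v : hequiv (sh_word u v) (sh_word v u).
Proof.
have [n] := ubnP (size u + size v); elim: n u v => // n IH u v + g.
case/lastP: u => [|u x]; first by rewrite sh_word_nil_l sh_word_nil_r.
case/lastP: v => [|v y]; first by rewrite sh_word_nil_l sh_word_nil_r.
rewrite !size_rcons => size_uv.
case: x; last first.
  by rewrite sh_word_rcons_b_l sh_word_rcons_b_r !linext_hrcons IH // size_rcons; lia.
case: y; last first.
  by rewrite sh_word_rcons_b_l sh_word_rcons_b_r !linext_hrcons IH // size_rcons; lia.
rewrite !linext_sh_word_rcons_aa (IH (rcons u La)) ?(IH u (rcons v La)) ?(IH u v);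
  rewrite ?size_rcons; try lia.
by congr (_ + _); rewrite addrC.
Qed.

Definition sh_assoc_at u v w := forall g,
  linext (fun x => linext g (sh_word x w)) (sh_word u v) =
  linext (fun y => linext g (sh_word u y)) (sh_word v w).

Lemma sh_assoc_at_nil_l v w : sh_assoc_at [::] v w.
Proof.
move=> g; rewrite sh_word_nil_l linext_word; apply: eq_linext => y.
by rewrite sh_word_nil_l linext_word.
Qed.

Lemma sh_assoc_at_nil_m u w : sh_assoc_at u [::] w.
Proof. by move=> g; rewrite sh_word_nil_l sh_word_nil_r !linext_word. Qed.

Lemma sh_assoc_at_nil_r u v : sh_assoc_at u v [::].
Proof.
move=> g; rewrite sh_word_nil_r linext_word; apply: eq_linext => x.
by rewrite sh_word_nil_r linext_word.
Qed.

Lemma sh_assoc_at_rcons_b_l u v w : sh_assoc_at u v w -> sh_assoc_at (rcons u Lb) v w.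
Proof.
move=> assoc_uvw g; rewrite sh_word_rcons_b_l linext_hrcons.
under eq_linext => x do rewrite sh_word_rcons_b_l linext_hrcons.
by rewrite assoc_uvw; apply: eq_linext => y; rewrite sh_word_rcons_b_l linext_hrcons.
Qed.

Lemma sh_assoc_at_rcons_b_m u v w : sh_assoc_at u v w -> sh_assoc_at u (rcons v Lb) w.
Proof.
move=> assoc_uvw g; rewrite sh_word_rcons_b_r linext_hrcons sh_word_rcons_b_l linext_hrcons.
under eq_linext => x do rewrite sh_word_rcons_b_l linext_hrcons.
by rewrite assoc_uvw; apply: eq_linext => y; rewrite sh_word_rcons_b_r linext_hrcons.
Qed.

Lemma sh_assoc_at_rcons_b_r u v w : sh_assoc_at u v w -> sh_assoc_at u v (rcons w Lb).
Proof.
move=> assoc_uvw g; rewrite sh_word_rcons_b_r linext_hrcons.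
under eq_linext => x do rewrite sh_word_rcons_b_r linext_hrcons.
by rewrite assoc_uvw; apply: eq_linext => y; rewrite sh_word_rcons_b_r linext_hrcons.
Qed.

Lemma sh_assoc_at_rcons_aaa u v w :
  sh_assoc_at (rcons u La) (rcons v La) w -> sh_assoc_at (rcons u La) v (rcons w La) ->
  sh_assoc_at u (rcons v La) (rcons w La) -> sh_assoc_at (rcons u La) v w ->
  sh_assoc_at u (rcons v La) w -> sh_assoc_at u v (rcons w La) -> sh_assoc_at u v w ->
  sh_assoc_at (rcons u La) (rcons v La) (rcons w La).
Proof.
move=> hUVw hUvW huVW hUvw huVw huvW huvw g; set ga := fun s => g (rcons s La).
have split_l s := linext_sh_word_rcons_aa g s w.
have split_r s := linext_sh_word_rcons_aa g u s.
rewrite [in RHS]sh_word_rcons_aa linext_hrcons (eq_linext _ _ _ split_r) !linextD linextZ.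
rewrite -(linext_hrcons (fun s => linext ga (sh_word u s))) -sh_word_rcons_aa.
rewrite [in LHS]sh_word_rcons_aa linext_hrcons (eq_linext _ _ _ split_l) !linextD linextZ.
rewrite -(linext_hrcons (fun s => linext ga (sh_word s w))) -sh_word_rcons_aa.
rewrite !linext_cat !linext_hscale evcX.
rewrite hUVw hUvW huVW hUvw huVw huvW huvw.
ring.
Qed.

Lemma sh_word_assoc u v w : sh_assoc_at u v w.
Proof.
have [n] := ubnP (size u + size v + size w); elim: n u v w => // n IH u v w.
case/lastP: u => [|u x] size_uvw; first exact: sh_assoc_at_nil_l.
case/lastP: v size_uvw => [|v y] size_uvw; first exact: sh_assoc_at_nil_m.
case/lastP: w size_uvw => [|w z] size_uvw; first exact: sh_assoc_at_nil_r.
move: size_uvw; rewrite !size_rcons => size_uvw.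
case: z size_uvw => size_uvw; last by apply/sh_assoc_at_rcons_b_r/IH; rewrite ?size_rcons; lia.
case: x size_uvw => size_uvw; last by apply/sh_assoc_at_rcons_b_l/IH; rewrite ?size_rcons; lia.
case: y size_uvw => size_uvw; last by apply/sh_assoc_at_rcons_b_m/IH; rewrite ?size_rcons; lia.
by apply: sh_assoc_at_rcons_aaa; apply: IH; rewrite ?size_rcons; lia.
Qed.

Definition theta_letter (x : letter) : hpoly :=
  if x is La then [:: (-1, [:: La]); (- 'X, [::])] else [:: (1, [:: Lb])].

Definition theta (w : word) : hpoly := foldr (fun x acc => hmul acc (theta_letter x)) hone w.

Definition htheta (p : hpoly) : hpoly := flatten [seq hscale t.1 (theta t.2) | t <- p].

Lemma linext_hmul_theta_a g z :
  linext g (hmul z (theta_letter La)) = - linext (fun w => g (rcons w La)) z - h * linext g z.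
Proof.
rewrite linext_hmul -linextZ -!linextN -linextD; apply: eq_linext => w.
by rewrite /linext !big_cons big_nil /= !evcN evc1 evcX cats1 cats0; ring.
Qed.

Lemma linext_hmul_theta_b g z :
  linext g (hmul z (theta_letter Lb)) = linext (fun w => g (rcons w Lb)) z.
Proof. by rewrite linext_hmul; apply: eq_linext => w; rewrite linext_word cats1. Qed.

Lemma theta_rcons y x : hequiv (theta (rcons y x)) (hmul (theta_letter x) (theta y)).
Proof.
elim: y => [|x' y IH] g /=; first by rewrite hmul1p hmulp1.
by rewrite (hmul_equiv_l _ _ _ IH) hmulA.
Qed.

Lemma theta_cat u v : hequiv (theta (u ++ v)) (hmul (theta v) (theta u)).
Proof.
elim: u => [|x u IH] g /=; first by rewrite hmulp1.
by rewrite (hmul_equiv_l _ _ _ IH) hmulA.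
Qed.

Lemma linext_htheta g p : linext g (htheta p) = linext (fun v => linext g (theta v)) p.
Proof.
rewrite /htheta linext_flatten big_map; apply: eq_bigr => t _.
exact: linext_hscale.
Qed.

Fixpoint omega_rev (z : hpoly) (rv : word) : hpoly :=
  if rv is x :: rv' then
    omega_rev (hmul z (theta_letter x)) rv' ++
    (if x is Lb then hsh [:: (1, rev rv')] z else [::])
  else [::].

Definition omega (z : hpoly) (v : word) : hpoly := omega_rev z (rev v).

Lemma omega_rcons_a z v : omega z (rcons v La) = omega (hmul z (theta_letter La)) v.
Proof. by rewrite /omega rev_rcons /= cats0. Qed.

Lemma omega_rcons_b z v :
  omega z (rcons v Lb) = omega (hmul z (theta_letter Lb)) v ++ hsh [:: (1, v)] z.
Proof. by rewrite /omega rev_rcons /= revK. Qed.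

Lemma linext_omega g z v :
  linext g (omega z v) = linext (fun y => linext g (omega [:: (1, y)] v)) z.
Proof.
elim/last_ind: v z g => [|v [] IH] z g.
- rewrite [LHS]linext_nil -(linext0 z).
  by apply: eq_linext => y; rewrite linext_nil.
- rewrite omega_rcons_a IH linext_hmul; apply: eq_linext => y.
  by rewrite omega_rcons_a IH linext_hmul linext_word.
rewrite omega_rcons_b linext_cat IH linext_hsh_word linext_hmul -linextD.
apply: eq_linext => y.
by rewrite omega_rcons_b linext_cat IH linext_hmul linext_word linext_hsh_word linext_word.
Qed.

Lemma omega_equiv z z' v : hequiv z z' -> hequiv (omega z v) (omega z' v).
Proof. by move=> zz' g; rewrite !(linext_omega g _ v) zz'. Qed.

Definition omega_derivation_at x y := forall z g,
  linext (fun v => linext g (omega z v)) (sh_word x y) =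
  linext g (omega (hsh [:: (1, y)] z) x) + linext g (omega (hsh [:: (1, x)] z) y).

Lemma omega_derivation_atC x y : omega_derivation_at x y -> omega_derivation_at y x.
Proof. by move=> der_xy z g; rewrite sh_wordC der_xy addrC. Qed.

Lemma omega_derivation_at_nil y : omega_derivation_at [::] y.
Proof.
move=> z g; rewrite sh_word_nil_l linext_word linext_nil add0r.
rewrite linext_omega [RHS]linext_omega linext_hsh_word.
by apply: eq_linext => w; rewrite sh_word_nil_l linext_word.
Qed.

Lemma omega_derivation_at_rcons_b x y :
  omega_derivation_at x y -> omega_derivation_at (rcons x Lb) y.
Proof.
move=> der_xy z g; rewrite sh_word_rcons_b_l linext_hrcons.
under eq_linext => v do rewrite omega_rcons_b linext_cat.
rewrite linextD der_xy omega_rcons_b linext_cat -!addrA; congr (_ + _).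
  rewrite !(linext_omega _ _ x) !linext_hsh_word linext_hmul_theta_b.
  rewrite linext_hmul_theta_b linext_hsh_word.
  by apply: eq_linext => w; rewrite sh_word_rcons_b_r linext_hrcons.
rewrite addrC; congr (_ + _).
  under eq_linext => v do rewrite linext_hsh_word.
  rewrite exchange_linext !linext_hsh_word; apply: eq_linext => w.
  by rewrite sh_word_assoc.
rewrite !(linext_omega _ _ y) !linext_hsh_word linext_hmul_theta_b.
by apply: eq_linext => w; rewrite sh_word_rcons_b_r sh_word_rcons_b_l !linext_hrcons.
Qed.

Lemma linext_hsh_rcons_a_theta g y z :
  let za := hmul z (theta_letter La) in
  linext g (hmul (hsh [:: (1, y)] za) (theta_letter La)) +
  linext g (hsh [:: (1, rcons y La)] za) + h * linext g (hsh [:: (1, y)] za) =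
  linext g (hmul (hsh [:: (1, rcons y La)] z) (theta_letter La)).
Proof.
rewrite /= !linext_hmul_theta_a !linext_hsh_word !linext_hmul_theta_a.
have split_aa := linext_sh_word_rcons_aa g y.
rewrite (eq_linext _ _ _ split_aa) !linextD linextZ; ring.
Qed.

Lemma omega_derivation_at_rcons_aa x y :
  omega_derivation_at (rcons x La) y -> omega_derivation_at x (rcons y La) ->
  omega_derivation_at x y -> omega_derivation_at (rcons x La) (rcons y La).
Proof.
move=> der_xa_y der_x_ya der_x_y z g.
rewrite sh_word_rcons_aa linext_hrcons.
under eq_linext => v do rewrite omega_rcons_a.
rewrite !linext_cat linext_hscale evcX der_xa_y der_x_ya der_x_y !omega_rcons_a.
rewrite !(linext_omega g _ x) !(linext_omega g _ y).
rewrite -(linext_hsh_rcons_a_theta _ y z) -(linext_hsh_rcons_a_theta _ x z).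
ring.
Qed.

Lemma omega_derivation x y : omega_derivation_at x y.
Proof.
have [n] := ubnP (size x + size y); elim: n x y => // n IH x y.
case/lastP: x => [|x a] size_xy; first exact: omega_derivation_at_nil.
case/lastP: y size_xy => [|y b] size_xy.
  exact/omega_derivation_atC/omega_derivation_at_nil.
move: size_xy; rewrite !size_rcons => size_xy.
case: a size_xy => size_xy; last first.
  by apply/omega_derivation_at_rcons_b/IH; rewrite ?size_rcons; lia.
case: b size_xy => size_xy; last first.
  by apply/omega_derivation_atC/omega_derivation_at_rcons_b/IH; rewrite ?size_rcons; lia.
by apply: omega_derivation_at_rcons_aa; apply: IH; rewrite ?size_rcons; lia.
Qed.

Definition omega1 (g : word -> F) (v : word) : F := linext g (omega hone v).

(* Since theta a = - a - hbar, the three terms cancel by linearity of omega in z. *)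
Lemma linext_omega1_sh_word_rcons_a g x y :
  linext (omega1 g) (sh_word x (rcons y La)) + linext (omega1 g) (sh_word (rcons x La) y)
  + h * linext (omega1 g) (sh_word x y) = 0.
Proof.
rewrite /omega1 !omega_derivation !omega_rcons_a !(linext_omega g _ x) !(linext_omega g _ y).
rewrite !linext_hmul_theta_a !linext_hsh_word !linext_word !sh_word_nil_r !linext_word.
ring.
Qed.

Lemma linext_omega1_hsh_word g p y :
  linext (omega1 g) (hsh p [:: (1, y)]) = linext (omega1 g) (hmul p (theta y)).
Proof.
elim/last_ind: y p => [|y x IH] p.
  rewrite hmulp1 linext_hsh; apply: eq_linext => u.
  by rewrite linext_word sh_word_nil_r linext_word.
rewrite (hmul_equiv_r _ _ _ (theta_rcons y x)) -hmulA -IH !linext_hsh.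
case: x.
  rewrite linext_hmul_theta_a -linextZ -!linextN -linextD; apply: eq_linext => u.
  rewrite !linext_word -[LHS]subr0 -(linext_omega1_sh_word_rcons_a g u y).
  ring.
rewrite linext_hmul_theta_b; apply: eq_linext => u.
by rewrite !linext_word sh_word_rcons_b_r sh_word_rcons_b_l.
Qed.

Lemma linext_omega1_hsh g p p' :
  linext (omega1 g) (hsh p p') = linext (omega1 g) (hmul p (htheta p')).
Proof.
rewrite linext_hsh exchange_linext linext_hmul.
under [RHS]eq_linext => u do rewrite linext_htheta.
rewrite [RHS]exchange_linext; apply: eq_linext => v.
rewrite -(linext_hmul _ p (theta v)) -linext_omega1_hsh_word linext_hsh.
by apply: eq_linext => u; rewrite linext_word.
Qed.

Lemma psi_block_theta k : psi_block k = hmul [:: (1, [:: Lb])] (theta (nseq k La)).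
Proof. by rewrite /psi_block; congr hmul; elim: k => //= k ->. Qed.

Lemma psi_blocks_rcons ks k :
  hequiv (psi_blocks (rcons ks k)) (hmul (psi_block k) (psi_blocks ks)).
Proof.
elim: ks => [|k' ks IH] g /=; first by rewrite hmul1p hmulp1.
by rewrite (hmul_equiv_l _ _ _ IH) hmulA.
Qed.

Lemma psi_blocks_theta ks :
  hequiv (hmul (psi_blocks ks) [:: (1, [:: Lb])]) (theta (rcons (block_word ks) Lb)).
Proof.
elim: ks => [|k ks IH] g /=; first by rewrite hmul1p.
rewrite rcons_cat psi_block_theta (hmul_equiv_l _ _ _ (theta_cat _ _)).
rewrite -(hmul_equiv_l _ _ _ (hmul_equiv_l _ _ _ IH)) !hmulA.
by rewrite (hmul_equiv_r _ _ _ (hmulA _ _ _)).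
Qed.

Lemma omega_cat_nseq_a k z v :
  hequiv (omega z (v ++ nseq k La)) (omega (hmul z (theta (nseq k La))) v).
Proof.
elim: k z v => [|k IH] z v g; first by rewrite cats0 (omega_equiv _ _ _ (hmulp1 z)).
by rewrite /= -cat_rcons IH omega_rcons_a (omega_equiv _ _ _ (hmulA _ _ _)).
Qed.

Lemma linext_omega_block_word g z ks :
  linext g (omega z (rcons (block_word ks) Lb)) =
  \sum_(0 <= i < (size ks).+1)
    linext g (hsh [:: (1, block_word (take i ks))] (hmul z (psi_blocks (drop i ks)))).
Proof.
elim/last_ind: ks z => [|ks k IH] z.
  rewrite big_nat1 omega_rcons_b linext_cat linext_nil add0r.
  by rewrite (hsh_equiv_r _ _ _ (hmulp1 z)).
rewrite block_word_rcons omega_rcons_b linext_cat -cat_rcons omega_cat_nseq_a IH.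
rewrite cat_rcons -block_word_rcons [in RHS]size_rcons [RHS]big_nat_recr //=.
congr (_ + _); last first.
  rewrite take_oversize ?drop_oversize ?size_rcons //.
  by rewrite (hsh_equiv_r _ _ _ (hmulp1 z)).
apply: eq_big_nat => i /andP [_ lt_i]; rewrite -cats1 takel_cat // cats1 drop_rcons //.
rewrite (hsh_equiv_r _ _ _ (hmul_equiv_r _ _ _ (psi_blocks_rcons _ _))).
rewrite psi_block_theta !(hsh_equiv_r _ _ _ (hmulA _ _ _)).
by rewrite (hsh_equiv_r _ _ _ (hmul_equiv_r _ _ _ (hmulA _ _ _))).
Qed.

Lemma eq_linext_all_binit f g p :
  all_binit p -> (forall v, binit v -> f v = g v) -> linext f p = linext g p.
Proof.
move=> /allP binit_p fg; rewrite /linext !big_seq; apply: eq_bigr => t tp.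
by rewrite fg //; apply: binit_p.
Qed.

Lemma linext_blockwise g (f : seq nat -> hpoly) p :
  linext g (flatten [seq if binit t.2 then hscale t.1 (f (dec t.2).2) else [::] | t <- p]) =
  linext (fun v => if binit v then linext g (f (dec v).2) else 0) p.
Proof.
rewrite linext_flatten big_map; apply: eq_bigr => t _.
by case: (binit t.2); rewrite ?linext_hscale ?linext_nil ?mulr0.
Qed.

Lemma linext_wS g p : all_binit p -> linext g (wS p) = linext (omega1 g) (hrcons Lb p).
Proof.
move=> binit_p; rewrite linext_hrcons linext_blockwise.
apply: eq_linext_all_binit => // v binit_v; rewrite binit_v /omega1.
rewrite -{2}(block_word_dec _ binit_v) linext_omega_block_word /wS_blocks linext_flatten.
rewrite big_map /index_iota subn0; apply: eq_bigr => i _.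
by rewrite (hsh_equiv_r _ _ _ (hmul1p _)).
Qed.

Lemma htheta_hrcons_b p : all_binit p -> hequiv (htheta (hrcons Lb p)) (hrcons Lb (psi p)).
Proof.
move=> binit_p g; rewrite linext_htheta !linext_hrcons linext_blockwise.
apply: eq_linext_all_binit => // v binit_v; rewrite binit_v.
rewrite -{1}(block_word_dec _ binit_v) -psi_blocks_theta linext_hmul.
by apply: eq_linext => w; rewrite linext_word cats1.
Qed.

Lemma wS_hsh_psi w w' :
  all_binit w -> all_binit w' -> hequiv (wS (hsh w w')) (wS (hmul w (psi w'))).
Proof.
move=> binit_w binit_w' g.
rewrite linext_wS ?all_binit_hsh // linext_wS ?all_binit_hmul ?all_binit_psi //.
have -> : linext (omega1 g) (hrcons Lb (hsh w w')) = linext (omega1 g) (hsh w (hrcons Lb w')).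
  rewrite linext_hrcons !linext_hsh; apply: eq_linext => u; rewrite linext_hrcons.
  by apply: eq_linext => v; rewrite sh_word_rcons_b_r linext_hrcons.
rewrite linext_omega1_hsh (hmul_equiv_r _ _ _ (htheta_hrcons_b _ binit_w')).
rewrite linext_hrcons !linext_hmul; apply: eq_linext => u; rewrite linext_hrcons.
by apply: eq_linext => v; rewrite rcons_cat.
Qed.

End LinearExtension.

Lemma Zq_linext (R : realType) (q : R[i]) M p :
  Zq q M p = linext (1 - q)
    (fun v => if binit v then ((1 - q) ^+ n0 v)^-1 * ZA q M (map toA (dec v).2) else 0) p.
Proof. by apply: eq_bigr => t _; case: (binit t.2); rewrite ?mulr0 ?mulrA. Qed.

(* The identity holds in H (wS_hsh_psi). *)
Theorem proposition4p2 (R : realType) (q : R[i]) (hq : 0 < `|q| < 1)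
  (M : nat) (hM : (1 <= M)%N) (w w' : hpoly) :
  inCA w -> inCA w' ->
  ZSsh q M (hsh w w') = ZSsh q M (hmul w (psi w')).
Proof.
move=> /inCA_all_binit binit_w /inCA_all_binit binit_w'.
by rewrite /ZSsh !Zq_linext wS_hsh_psi.
Qed.
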